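(* Let $(L,\le,\wedge,\vee,0,1,{}^\perp)$ be a complete orthocomplemented lattice. Then $(\mathrm{Sub}_{\mathrm{clop}}(\Sigma^L),\le,\wedge,\vee,{}^\bullet)$ is a De Morgan algebra if and only if $(\mathrm{Sub}_{\mathrm{clop}}(\Sigma^L),\le,\wedge,\vee,\varnothing,\Sigma^L,{}^\bullet)$ is a boolean lattice; likewise $(\mathrm{Sub}_{\mathrm{clop}}(\Sigma^L),\le,\wedge,\vee,{}^\circ)$ is a De Morgan algebra if and only if $(\mathrm{Sub}_{\mathrm{clop}}(\Sigma^L),\le,\wedge,\vee,\varnothing,\Sigma^L,{}^\circ)$ is a boolean lattice.
   Context: Let $(L,\le,\wedge,\vee,0,1,{}^\perp)$ be a complete orthocomplemented lattice (bounded lattice with ${}^\perp$ antitone, $x^{\perp\perp}=x$, $x\wedge x^\perp=0$, $x\vee x^\perp=1$, all subsets having meets and joins). $\mathcal{V}_c(L)$ is the set of complete boolean sublattices of $L$ (containing $0,1$, closed under ${}^\perp$ and arbitrary meets and joins of $L$), other than $\{0,1\}$, ordered by inclusion. For a boolean lattice $V$, $\mathrm{sp}(V)$ is its Stone spectrum (boolean homomorphisms $V\to\{0,1\}$) with the Stone topology with basis $\varkappa_V(a):=\{\xi\in\mathrm{sp}(V)\mid\xi(a)=1\}$, $a\in V$. The spectral presheaf $\Sigma^L$ sends $V\mapsto\mathrm{sp}(V)$ and $V\subseteq W$ to restriction $\lambda\mapsto\lambda|_V$. $\mathrm{Sub}_{\mathrm{clop}}(\Sigma^L)$: subpresheaves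 $S$ with each $S_V$ clopen; complete distributive lattice with componentwise inclusion order, bottom $\varnothing$, top $\Sigma^L$, $(\bigwedge_i S^i)_V=\mathrm{int}(\bigcap_i S^i_V)$, $(\bigvee_i S^i)_V=\mathrm{cl}(\bigcup_i S^i_V)$. Daseinisations: $\delta^\wedge(a)_V:=\varkappa_V(\bigwedge\{b\in V\mid a\le b\})$, $\delta^\vee(a)_V:=\varkappa_V(\bigvee\{b\in V\mid b\le a\})$; $\varepsilon^\wedge(S):=\bigvee\{a\in L\mid\delta^\wedge(a)\le S\}$, $\varepsilon^\vee(S):=\bigwedge\{a\in L\mid S\le\delta^\vee(a)\}$; $S^\bullet:=\delta^\wedge((\varepsilon^\wedge(S))^\perp)$, $S^\circ:=\delta^\vee((\varepsilon^\vee(S))^\perp)$. A De Morgan algebra is a distributive lattice with a map ${}^\neg$ that is an involution: $x\le y\Rightarrow y^\neg\le x^\neg$, $x\le x^{\neg\neg}$, $x^{\neg\neg}\le x$. A boolean lattice is a bounded distributive lattice with an orthocomplementation (antitone, $x^{\neg\neg}=x$, $x\wedge x^\neg=0$, $x\vee x^\neg=1$). *)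

From Stdlib Require Import Classical.

Record COL := {
  car :> Type;
  le : car -> car -> Prop;
  le_refl : forall x, le x x;
  le_trans : forall x y z, le x y -> le y z -> le x z;
  le_antisym : forall x y, le x y -> le y x -> x = y;
  Inf : (car -> Prop) -> car;
  Inf_lb : forall (S : car -> Prop) x, S x -> le (Inf S) x;
  Inf_glb : forall (S : car -> Prop) y, (forall x, S x -> le y x) -> le y (Inf S);
  Sup : (car -> Prop) -> car;
  Sup_ub : forall (S : car -> Prop) x, S x -> le x (Sup S);
  Sup_lub : forall (S : car -> Prop) y, (forall x, S x -> le x y) -> le (Sup S) y;
  perp : car -> car;
  perp_anti : forall x y, le x y -> le (perp y) (perp x);
  perp_invol : forall x, perp (perp x) = x;
  perp_meet : forall x, Inf (fun z => z = x \/ z = perp x) = Inf (fun _ => True);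
  perp_join : forall x, Sup (fun z => z = x \/ z = perp x) = Sup (fun _ => True)
}.

Arguments le {c} _ _.
Arguments Inf {c} _.
Arguments Sup {c} _.
Arguments perp {c} _.
Arguments Inf_lb {c} _ _ _.
Arguments Inf_glb {c} _ _ _.
Arguments Sup_ub {c} _ _ _.
Arguments Sup_lub {c} _ _ _.
Arguments le_antisym {c} _ _ _ _.
Arguments le_refl {c} _.

Section Generic.
(* An algebraic structure whose carrier is the subset [P] of a type [T]
   (equality of elements = mutual order, i.e. antisymmetry of [leT]). *)
Context {T : Type} (P : T -> Prop) (leT : T -> T -> Prop) (meetT joinT : T -> T -> T).

Definition eqv (x y : T) := leT x y /\ leT y x.

Definition is_lattice : Prop :=
  (forall x y, P x -> P y -> P (meetT x y) /\ P (joinT x y)) /\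
  (forall x, P x -> leT x x) /\
  (forall x y z, P x -> P y -> P z -> leT x y -> leT y z -> leT x z) /\
  (forall x y, P x -> P y ->
     leT (meetT x y) x /\ leT (meetT x y) y /\
     forall z, P z -> leT z x -> leT z y -> leT z (meetT x y)) /\
  (forall x y, P x -> P y ->
     leT x (joinT x y) /\ leT y (joinT x y) /\
     forall z, P z -> leT x z -> leT y z -> leT (joinT x y) z).

Definition is_distributive : Prop :=
  forall x y z, P x -> P y -> P z ->
    eqv (meetT x (joinT y z)) (joinT (meetT x y) (meetT x z)).

Definition DeMorganAlgebra (neg : T -> T) : Prop :=
  is_lattice /\ is_distributive /\
  (forall x, P x -> P (neg x)) /\
  (forall x y, P x -> P y -> leT x y -> leT (neg y) (neg x)) /\
  (forall x, P x -> leT x (neg (neg x))) /\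
  (forall x, P x -> leT (neg (neg x)) x).

Definition BooleanLattice (botT topT : T) (neg : T -> T) : Prop :=
  is_lattice /\ is_distributive /\
  P botT /\ P topT /\
  (forall x, P x -> leT botT x /\ leT x topT) /\
  (forall x, P x -> P (neg x)) /\
  (forall x y, P x -> P y -> leT x y -> leT (neg y) (neg x)) /\
  (forall x, P x -> eqv (neg (neg x)) x) /\
  (forall x, P x -> eqv (meetT x (neg x)) botT) /\
  (forall x, P x -> eqv (joinT x (neg x)) topT).
End Generic.

Section Spectral.
Context {L : COL}.

Definition bot : L := Inf (fun _ => True).
Definition top : L := Sup (fun _ => True).
Definition meet (x y : L) : L := Inf (fun z => z = x \/ z = y).
Definition join (x y : L) : L := Sup (fun z => z = x \/ z = y).

(* complete boolean sublattice of L, different from {0,1} *)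
Definition is_cbs (V : L -> Prop) : Prop :=
  V bot /\ V top /\
  (forall x, V x -> V (perp x)) /\
  (forall S : L -> Prop, (forall x, S x -> V x) -> V (Inf S) /\ V (Sup S)) /\
  (forall x y z, V x -> V y -> V z -> meet x (join y z) = join (meet x y) (meet x z)) /\
  ~ (forall x, V x <-> x = bot \/ x = top).

Definition Vc := { V : L -> Prop | is_cbs V }.
Definition vset (V : Vc) : L -> Prop := proj1_sig V.
Definition vincl (V W : Vc) : Prop := forall x, vset V x -> vset W x.

Definition sub (V : Vc) := { x : L | vset V x }.

Definition is_hom (V : Vc) (xi : sub V -> bool) : Prop :=
  (forall c : sub V, proj1_sig c = bot -> xi c = false) /\
  (forall c : sub V, proj1_sig c = top -> xi c = true) /\
  (forall a b c : sub V, proj1_sig c = meet (proj1_sig a) (proj1_sig b) ->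
       xi c = andb (xi a) (xi b)) /\
  (forall a b c : sub V, proj1_sig c = join (proj1_sig a) (proj1_sig b) ->
       xi c = orb (xi a) (xi b)) /\
  (forall a c : sub V, proj1_sig c = perp (proj1_sig a) -> xi c = negb (xi a)).

Definition sp (V : Vc) := { xi : sub V -> bool | is_hom V xi }.

Lemma res_hom (V W : Vc) (H : vincl V W) (lam : sp W) :
  is_hom V (fun x : sub V => proj1_sig lam (exist _ (proj1_sig x) (H _ (proj2_sig x)))).
Proof.
  destruct lam as [l [h0 [h1 [hm [hj hp]]]]]; simpl.
  split; [|split; [|split; [|split]]].
  - intros c Hc; apply h0; exact Hc.
  - intros c Hc; apply h1; exact Hc.
  - intros a b c Hc; apply hm; exact Hc.
  - intros a b c Hc; apply hj; exact Hc.
  - intros a c Hc; apply hp; exact Hc.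
Qed.

Definition res (V W : Vc) (H : vincl V W) (lam : sp W) : sp V :=
  exist _ _ (res_hom V W H lam).

Definition kappa (V : Vc) (a : L) (xi : sp V) : Prop :=
  exists h : vset V a, proj1_sig xi (exist _ a h) = true.

Definition openS (V : Vc) (U : sp V -> Prop) : Prop :=
  forall xi, U xi -> exists a, vset V a /\ kappa V a xi /\ forall eta, kappa V a eta -> U eta.
Definition clopenS (V : Vc) (U : sp V -> Prop) : Prop :=
  openS V U /\ openS V (fun xi => ~ U xi).
Definition interior (V : Vc) (U : sp V -> Prop) (xi : sp V) : Prop :=
  exists a, vset V a /\ kappa V a xi /\ forall eta, kappa V a eta -> U eta.
Definition closure (V : Vc) (U : sp V -> Prop) (xi : sp V) : Prop :=
  forall a, vset V a -> kappa V a xi -> exists eta, kappa V a eta /\ U eta.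

Definition Family := forall V : Vc, sp V -> Prop.
Definition is_subpresheaf (S : Family) : Prop :=
  forall (V W : Vc) (H : vincl V W) (lam : sp W), S W lam -> S V (res V W H lam).
Definition is_subclop (S : Family) : Prop :=
  is_subpresheaf S /\ forall V, clopenS V (S V).

Definition leF (S T : Family) : Prop := forall V xi, S V xi -> T V xi.

Definition meetF (S T : Family) : Family :=
  fun V => interior V (fun xi => S V xi /\ T V xi).
Definition joinF (S T : Family) : Family :=
  fun V => closure V (fun xi => S V xi \/ T V xi).
Definition emptyF : Family := fun V _ => False.
Definition fullF : Family := fun V _ => True.

Definition delta_and (a : L) : Family :=
  fun V => kappa V (Inf (fun b => vset V b /\ le a b)).
Definition delta_or (a : L) : Family :=
  fun V => kappa V (Sup (fun b => vset V b /\ le b a)).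

Definition eps_and (S : Family) : L :=
  Sup (fun a => leF (delta_and a) S).
Definition eps_or (S : Family) : L :=
  Inf (fun a => leF S (delta_or a)).

Lemma meet_le (x y : L) : le x y -> meet x y = x.
Proof.
  intro Hxy. apply le_antisym.
  - apply Inf_lb; left; reflexivity.
  - apply Inf_glb; intros z [->| ->]; [apply le_refl | exact Hxy].
Qed.

Lemma hom_mono (V : Vc) (xi : sp V) (a b : sub V) :
  le (proj1_sig a) (proj1_sig b) -> proj1_sig xi a = true -> proj1_sig xi b = true.
Proof.
  intros Hab Ha. assert (hm := proj1 (proj2 (proj2 (proj2_sig xi)))).
  assert (E := hm a b a (eq_sym (meet_le _ _ Hab))).
  rewrite Ha in E; simpl in E; congruence.
Qed.

Lemma kappa_mono (V : Vc) (a b : L) (xi : sp V) :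
  vset V b -> le a b -> kappa V a xi -> kappa V b xi.
Proof.
  intros hb Hab [ha Ha]. exists hb.
  exact (hom_mono V xi (exist _ a ha) (exist _ b hb) Hab Ha).
Qed.

Lemma vset_perp (V : Vc) x : vset V x -> vset V (perp x).
Proof. exact (proj1 (proj2 (proj2 (proj2_sig V))) x). Qed.
Lemma vset_Inf (V : Vc) (S : L -> Prop) : (forall x, S x -> vset V x) -> vset V (Inf S).
Proof. intro H; exact (proj1 (proj1 (proj2 (proj2 (proj2 (proj2_sig V)))) S H)). Qed.
Lemma vset_Sup (V : Vc) (S : L -> Prop) : (forall x, S x -> vset V x) -> vset V (Sup S).
Proof. intro H; exact (proj2 (proj1 (proj2 (proj2 (proj2 (proj2_sig V)))) S H)). Qed.
Lemma vset_top (V : Vc) : vset V top.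
Proof. exact (proj1 (proj2 (proj2_sig V))). Qed.

Lemma kappa_clopen (V : Vc) (c : L) : vset V c -> clopenS V (kappa V c).
Proof.
  intro hc; split.
  - intros xi Hxi; exists c; split; [exact hc | split; [exact Hxi | auto]].
  - intros xi Hn.
    assert (hpc : vset V (perp c)) by (apply vset_perp; exact hc).
    exists (perp c); split; [exact hpc|split].
    + exists hpc. assert (hp := proj2 (proj2 (proj2 (proj2 (proj2_sig xi))))).
      rewrite (hp (exist _ c hc) (exist _ (perp c) hpc) eq_refl).
      destruct (proj1_sig xi (exist _ c hc)) eqn:E; [|reflexivity].
      exfalso; apply Hn; exists hc; exact E.
    + intros eta [h' H'] [h Hh]. assert (hp := proj2 (proj2 (proj2 (proj2 (proj2_sig eta))))).
      rewrite (hp (exist _ c h) (exist _ (perp c) h') eq_refl) in H'.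
      rewrite Hh in H'; discriminate.
Qed.

Lemma open_ext (V : Vc) (U U' : sp V -> Prop) :
  (forall xi, U xi <-> U' xi) -> openS V U -> openS V U'.
Proof.
  intros E HU xi Hxi. destruct (HU xi (proj2 (E xi) Hxi)) as [a [ha [Hk Hs]]].
  exists a; split; [exact ha|split; [exact Hk|]]. intros eta He; apply E, Hs, He.
Qed.

Lemma open_inter (V : Vc) (U W : sp V -> Prop) :
  openS V U -> openS V W -> openS V (fun xi => U xi /\ W xi).
Proof.
  intros HU HW xi [Hu Hw].
  destruct (HU xi Hu) as [a [ha [Ka Sa]]].
  destruct (HW xi Hw) as [b [hb [Kb Sb]]].
  assert (hc : vset V (meet a b)).
  { apply vset_Inf. intros z [->| ->]; assumption. }
  exists (meet a b); split; [exact hc|split].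
  - destruct Ka as [ha' Ka]; destruct Kb as [hb' Kb]. exists hc.
    assert (hm := proj1 (proj2 (proj2 (proj2_sig xi)))).
    rewrite (hm (exist _ a ha') (exist _ b hb') (exist _ (meet a b) hc) eq_refl).
    rewrite Ka, Kb; reflexivity.
  - intros eta Ke; split.
    + apply Sa. apply (kappa_mono V (meet a b)); [exact ha| |exact Ke].
      apply Inf_lb; left; reflexivity.
    + apply Sb. apply (kappa_mono V (meet a b)); [exact hb| |exact Ke].
      apply Inf_lb; right; reflexivity.
Qed.

Lemma open_union (V : Vc) (U W : sp V -> Prop) :
  openS V U -> openS V W -> openS V (fun xi => U xi \/ W xi).
Proof.
  intros HU HW xi [Hu|Hw].
  - destruct (HU xi Hu) as [a [ha [Ka Sa]]]; exists a; split; [exact ha|split; [exact Ka|]].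
    intros eta He; left; apply Sa, He.
  - destruct (HW xi Hw) as [a [ha [Ka Sa]]]; exists a; split; [exact ha|split; [exact Ka|]].
    intros eta He; right; apply Sa, He.
Qed.

Lemma interior_open (V : Vc) (U : sp V -> Prop) :
  openS V U -> forall xi, interior V U xi <-> U xi.
Proof.
  intros HU xi; split.
  - intros [a [_ [Ka Sa]]]; apply Sa, Ka.
  - intro Hxi; exact (HU xi Hxi).
Qed.

Lemma closure_closed (V : Vc) (U : sp V -> Prop) :
  openS V (fun xi => ~ U xi) -> forall xi, closure V U xi <-> U xi.
Proof.
  intros HC xi; split.
  - intro Hcl. destruct (classic (U xi)) as [H|H]; [exact H|].
    destruct (HC xi H) as [a [ha [Ka Sa]]].
    destruct (Hcl a ha Ka) as [eta [Ke Ue]]. exfalso; exact (Sa eta Ke Ue).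
  - intros Hxi a _ Ka; exists xi; split; assumption.
Qed.

Lemma meetF_subclop (S T : Family) : is_subclop S -> is_subclop T -> is_subclop (meetF S T).
Proof.
  intros [PS CS] [PT CT].
  assert (E : forall V xi, meetF S T V xi <-> S V xi /\ T V xi).
  { intros V xi; apply interior_open, open_inter; [apply CS|apply CT]. }
  split.
  - intros V W H lam Hl. apply E in Hl as [Hs Ht]. apply E; split.
    + apply PS, Hs.
    + apply PT, Ht.
  - intro V; split.
    + apply (open_ext V (fun xi => S V xi /\ T V xi)).
      { intro xi; split; apply E. }
      apply open_inter; [apply CS|apply CT].
    + apply (open_ext V (fun xi => ~ S V xi \/ ~ T V xi)).
      { intro xi; rewrite E; tauto. }
      apply open_union; [apply CS|apply CT].
Qed.

Lemma joinF_subclop (S T : Family) : is_subclop S -> is_subclop T -> is_subclop (joinF S T).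
Proof.
  intros [PS CS] [PT CT].
  assert (E : forall V xi, joinF S T V xi <-> S V xi \/ T V xi).
  { intros V xi; apply closure_closed.
    apply (open_ext V (fun xi => ~ S V xi /\ ~ T V xi)); [intro; tauto|].
    apply open_inter; [apply CS|apply CT]. }
  split.
  - intros V W H lam Hl. apply E in Hl. apply E.
    destruct Hl as [Hs|Ht]; [left; apply PS, Hs | right; apply PT, Ht].
  - intro V; split.
    + apply (open_ext V (fun xi => S V xi \/ T V xi)).
      { intro xi; split; apply E. }
      apply open_union; [apply CS|apply CT].
    + apply (open_ext V (fun xi => ~ S V xi /\ ~ T V xi)).
      { intro xi; rewrite E; tauto. }
      apply open_inter; [apply CS|apply CT].
Qed.

Lemma top_kappa (V : Vc) (xi : sp V) : vset V top /\ kappa V top xi.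
Proof.
  split; [apply vset_top|]. exists (vset_top V).
  apply (proj1 (proj2 (proj2_sig xi))); reflexivity.
Qed.

Lemma emptyF_subclop : is_subclop emptyF.
Proof.
  split; [intros V W H lam []|].
  intro V; split; [intros xi []|].
  intros xi _. destruct (top_kappa V xi) as [ht Kt].
  exists top; split; [exact ht|split; [exact Kt|]]. intros eta _ [].
Qed.

Lemma fullF_subclop : is_subclop fullF.
Proof.
  split; [intros V W H lam _; exact I|].
  intro V; split; [|intros xi H; exfalso; apply H; exact I].
  intros xi _. destruct (top_kappa V xi) as [ht Kt].
  exists top; split; [exact ht|split; [exact Kt|]]. intros; exact I.
Qed.

Lemma delta_and_subclop (a : L) : is_subclop (delta_and a).
Proof.
  assert (HI : forall V : Vc, vset V (Inf (fun b => vset V b /\ le a b))).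
  { intros V; first [apply vset_Inf | apply vset_Sup]. intros x [Hx _]; exact Hx. }
  split.
  - intros V W H lam [hW K]. unfold delta_and.
    exists (HI V). simpl.
    refine (hom_mono W lam (exist _ _ hW) (exist _ _ (H _ (HI V))) _ K).
    simpl. apply Inf_glb. intros x [Hx Hax]. apply Inf_lb. split; [apply H, Hx|exact Hax].
  - intro V; apply kappa_clopen, HI.
Qed.



Definition bulletF (S : Family) : Family := delta_and (perp (eps_and S)).
Definition circF (S : Family) : Family := delta_or (perp (eps_or S)).

End Spectral.

(* The nontrivial implications come from two facts about a clopen
   subpresheaf S. A point of sp(V) outside S_V lies in a basic clopen
   kappa_V(c) disjoint from S_V; by the Boolean prime ideal theorem in V,
   disjointness of basic clopens is disjointness in V, so every b with
   delta^and(b) <= S satisfies b <= c^perp, i.e. the point lies in S^bullet.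
   Hence S \/ S^bullet = Sigma, and dually S /\ S^circ = 0.
   In a De Morgan algebra with ~1 = 0 in which x \/ ~x = 1 for all x, the
   inequality x \/ ~x <= ~(x /\ ~x) gives 1 <= ~(x /\ ~x), so x /\ ~x = 0 by
   involution and the algebra is boolean; the circ case is the order dual. *)

From Stdlib Require Import Classical ClassicalEpsilon Bool.
From mathcomp Require classical_sets boolp.

Set Bullet Behavior "Strict Subproofs".

Lemma zorn_chain_union (T : Type) (P : (T -> Prop) -> Prop) :
  (forall F : (T -> Prop) -> Prop, (forall X, F X -> P X) ->
     (forall X Y, F X -> F Y -> (forall t, X t -> Y t) \/ (forall t, Y t -> X t)) ->
     P (fun t => exists X, F X /\ X t)) ->
  exists A, P A /\ forall B, (forall t, A t -> B t) -> P B -> forall t, B t -> A t.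
Proof.
  intro Hchain.
  destruct (@classical_sets.Zorn_bigcup T P) as [A [PA Amax]].
  - intros F FP Ftot.
    replace (classical_sets.bigcup F (fun X => X)) with (fun t => exists X, F X /\ X t).
    + exact (Hchain F FP Ftot).
    + apply boolp.funext; intro t; apply boolp.propext; split.
      * intros [X [FX Xt]]; exists X; assumption.
      * intros [X FX Xt]; exists X; split; assumption.
  - exists A; split; [exact PA|]. intros B AB PB t Bt.
    apply NNPP; intro nAt. apply (Amax B); [|exact PB].
    split; [exact AB|]. intro BA; exact (nAt (BA t Bt)).
Qed.

Section DeMorganBoolean.
Context {T : Type} (P : T -> Prop) (leT : T -> T -> Prop) (meetT joinT : T -> T -> T)
  (neg : T -> T) (botT topT : T).

Lemma deMorgan_of_boolean :
  BooleanLattice P leT meetT joinT botT topT neg -> DeMorganAlgebra P leT meetT joinT neg.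
Proof.
  intros [lat [dist [_ [_ [_ [negP [anti [inv _]]]]]]]].
  repeat (split; [assumption|]). split; intros x Px; apply (inv x Px).
Qed.

Hypothesis DM : DeMorganAlgebra P leT meetT joinT neg.
Hypothesis Pbot : P botT.
Hypothesis Ptop : P topT.
Hypothesis bounded : forall x, P x -> leT botT x /\ leT x topT.

Lemma join_le_neg_meet x : P x -> leT (joinT x (neg x)) (neg (meetT x (neg x))).
Proof.
  destruct DM as [[cl [_ [trans [mt jn]]]] [_ [negP [anti [inv1 _]]]]]; intro Px.
  assert (Pnx := negP x Px). destruct (cl x (neg x) Px Pnx) as [Pm _].
  destruct (mt x (neg x) Px Pnx) as [mx [mnx _]].
  apply (proj2 (proj2 (jn x (neg x) Px Pnx))); [now apply negP|..].
  - apply (trans _ (neg (neg x))); auto.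
  - now apply anti.
Qed.

Lemma neg_join_le_meet x : P x -> leT (neg (joinT x (neg x))) (meetT x (neg x)).
Proof.
  destruct DM as [[cl [_ [trans [mt jn]]]] [_ [negP [anti [_ inv2]]]]]; intro Px.
  assert (Pnx := negP x Px). destruct (cl x (neg x) Px Pnx) as [_ Pj].
  destruct (jn x (neg x) Px Pnx) as [jx [jnx _]].
  apply (proj2 (proj2 (mt x (neg x) Px Pnx))); [now apply negP|..].
  - apply (trans _ (neg (neg x))); auto.
  - now apply anti.
Qed.

Lemma boolean_of_excluded_middle :
  leT (neg topT) botT -> (forall x, P x -> leT topT (joinT x (neg x))) ->
  BooleanLattice P leT meetT joinT botT topT neg.
Proof.
  intros negtop em.
  pose proof DM as [lat [dist [negP [anti [inv1 inv2]]]]]. pose proof lat as [cl [_ [trans _]]].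
  do 6 (split; [assumption|]). split; [assumption|]. split; [intros x Px; split; auto|].
  split; intros x Px; pose proof (cl x (neg x) Px (negP x Px)) as [Pm Pj].
  - split; [|apply bounded, Pm].
    assert (top_le : leT topT (neg (meetT x (neg x)))).
    { apply (trans _ (joinT x (neg x))); auto using join_le_neg_meet. }
    apply (trans _ (neg (neg (meetT x (neg x)))) _ Pm (negP _ (negP _ Pm)) Pbot (inv1 _ Pm)).
    exact (trans _ _ _ (negP _ (negP _ Pm)) (negP _ Ptop) Pbot
             (anti _ _ Ptop (negP _ Pm) top_le) negtop).
  - split; [apply bounded, Pj | auto].
Qed.

Lemma boolean_of_noncontradiction :
  leT topT (neg botT) -> (forall x, P x -> leT (meetT x (neg x)) botT) ->
  BooleanLattice P leT meetT joinT botT topT neg.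
Proof.
  intros negbot nc.
  pose proof DM as [lat [dist [negP [anti [inv1 inv2]]]]]. pose proof lat as [cl [_ [trans _]]].
  do 6 (split; [assumption|]). split; [assumption|]. split; [intros x Px; split; auto|].
  split; intros x Px; pose proof (cl x (neg x) Px (negP x Px)) as [Pm Pj].
  - split; [auto | apply bounded, Pm].
  - split; [apply bounded, Pj|].
    assert (le_bot : leT (neg (joinT x (neg x))) botT).
    { apply (trans _ (meetT x (neg x))); auto using neg_join_le_meet. }
    apply (trans _ (neg (neg (joinT x (neg x)))) _ Ptop (negP _ (negP _ Pj)) Pj);
      [|exact (inv2 _ Pj)].
    exact (trans _ _ _ Ptop (negP _ Pbot) (negP _ (negP _ Pj))
             negbot (anti _ _ (negP _ Pj) Pbot le_bot)).
Qed.

End DeMorganBoolean.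

Section Lattice.
Context {L : COL}.

Lemma le_bot (x : L) : le bot x.
Proof. now apply Inf_lb. Qed.
Lemma le_top (x : L) : le x top.
Proof. now apply Sup_ub. Qed.
Lemma meet_lb1 (x y : L) : le (meet x y) x.
Proof. now apply Inf_lb; left. Qed.
Lemma meet_lb2 (x y : L) : le (meet x y) y.
Proof. now apply Inf_lb; right. Qed.
Lemma meet_glb (x y z : L) : le z x -> le z y -> le z (meet x y).
Proof. intros H1 H2; apply Inf_glb; now intros w [->| ->]. Qed.
Lemma join_ub1 (x y : L) : le x (join x y).
Proof. now apply Sup_ub; left. Qed.
Lemma join_ub2 (x y : L) : le y (join x y).
Proof. now apply Sup_ub; right. Qed.
Lemma join_lub (x y z : L) : le x z -> le y z -> le (join x y) z.
Proof. intros H1 H2; apply Sup_lub; now intros w [->| ->]. Qed.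

Lemma meet_perp (x : L) : meet x (perp x) = bot.
Proof. apply perp_meet. Qed.
Lemma join_perp (x : L) : join x (perp x) = top.
Proof. apply perp_join. Qed.

Lemma le_perp_sym (x y : L) : le x (perp y) -> le y (perp x).
Proof. intro H. apply perp_anti in H. now rewrite perp_invol in H. Qed.

Lemma perp_join_meet (a b : L) : perp (join a b) = meet (perp a) (perp b).
Proof.
  apply le_antisym.
  - apply meet_glb; apply perp_anti; [apply join_ub1|apply join_ub2].
  - apply le_perp_sym, join_lub; apply le_perp_sym; [apply meet_lb1|apply meet_lb2].
Qed.

Lemma perp_top_le_bot : le (perp (@top L)) bot.
Proof. rewrite <- (meet_perp top). apply meet_glb; [apply le_top|apply le_refl]. Qed.
Lemma top_le_perp_bot : le (@top L) (perp bot).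
Proof. rewrite <- (join_perp bot). apply join_lub; [apply le_bot|apply le_refl]. Qed.

End Lattice.

Section BooleanSubalgebra.
Context {L : COL} (V : @Vc L).

Lemma vset_bot : vset V bot.
Proof. exact (proj1 (proj2_sig V)). Qed.
Lemma vset_meet x y : vset V x -> vset V y -> vset V (meet x y).
Proof. intros; apply vset_Inf; now intros z [->| ->]. Qed.

Lemma vset_meet_join_distr x y z : vset V x -> vset V y -> vset V z ->
  meet x (join y z) = join (meet x y) (meet x z).
Proof. exact (proj1 (proj2 (proj2 (proj2 (proj2 (proj2_sig V))))) x y z). Qed.

Lemma meet_eq_bot_le_perp (a y : L) : vset V a -> vset V y -> meet a y = bot ->
  le a (perp y).
Proof.
  intros ha hy E.
  assert (Ea : a = meet a (join y (perp y))).
  { rewrite join_perp. symmetry. apply meet_le, le_top. }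
  rewrite Ea, vset_meet_join_distr, E; auto using vset_perp.
  apply join_lub; [apply le_bot|apply meet_lb2].
Qed.

Lemma kappa_bot (xi : sp V) : ~ kappa V bot xi.
Proof.
  intros [h K]. now rewrite (proj1 (proj2_sig xi) (exist _ bot h) eq_refl) in K.
Qed.

Lemma kappa_perp (c : L) (xi : sp V) : vset V c ->
  (kappa V (perp c) xi <-> ~ kappa V c xi).
Proof.
  intro hc. assert (hpc := vset_perp V c hc).
  assert (E := proj2 (proj2 (proj2 (proj2 (proj2_sig xi)))) (exist _ c hc)
                 (exist _ (perp c) hpc) eq_refl).
  unfold kappa; split.
  - intros [h' K'] [h K]. rewrite (proof_irrelevance _ h' hpc), E in K'.
    rewrite (proof_irrelevance _ h hc) in K. now rewrite K in K'.
  - intro N. exists hpc. rewrite E.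
    destruct (proj1_sig xi (exist _ c hc)) eqn:K; [|reflexivity].
    exfalso; apply N; now exists hc.
Qed.

End BooleanSubalgebra.

Section Ultrafilters.
Context {L : COL} (V : @Vc L).

Record is_ultrafilter (A : L -> Prop) : Prop := {
  uf_sub : forall y, A y -> vset V y;
  uf_up : forall y z, A y -> vset V z -> le y z -> A z;
  uf_meet : forall y z, A y -> A z -> A (meet y z);
  uf_proper : ~ A bot;
  uf_prime : forall y, vset V y -> A y \/ A (perp y) }.

Section Point.
Variable A : L -> Prop.
Hypothesis HA : is_ultrafilter A.

Lemma uf_meet_iff a b : vset V a -> vset V b -> (A (meet a b) <-> A a /\ A b).
Proof.
  intros ha hb; split.
  - intro H; split; eapply uf_up; eauto using meet_lb1, meet_lb2.
  - intros [Ha Hb]; now apply (uf_meet _ HA).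
Qed.

Lemma uf_perp_iff a : vset V a -> (A (perp a) <-> ~ A a).
Proof.
  intro ha; split.
  - intros Hp Ha. apply (uf_proper _ HA). rewrite <- (meet_perp a). now apply (uf_meet _ HA).
  - intro N. now destruct (uf_prime _ HA a ha).
Qed.

Lemma uf_join_iff a b : vset V a -> vset V b -> (A (join a b) <-> A a \/ A b).
Proof.
  intros ha hb. assert (hj : vset V (join a b)) by (apply vset_Sup; now intros z [->| ->]).
  split.
  - intro Hj. apply NNPP; intro N. apply (uf_perp_iff _ hj); [|exact Hj].
    rewrite perp_join_meet. apply (uf_meet _ HA); apply uf_perp_iff; tauto.
  - intros [H|H]; eapply uf_up; eauto using join_ub1, join_ub2.
Qed.

Definition uf_point (c : sub V) : bool :=
  if excluded_middle_informative (A (proj1_sig c)) then true else false.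

Lemma uf_point_true c : uf_point c = true <-> A (proj1_sig c).
Proof. unfold uf_point. destruct excluded_middle_informative; intuition discriminate. Qed.

Lemma uf_point_hom : is_hom V uf_point.
Proof.
  repeat split.
  - intros c Hc. apply not_true_is_false. rewrite uf_point_true, Hc. apply HA.
  - intros c Hc. apply uf_point_true. rewrite Hc.
    destruct (uf_prime _ HA bot (vset_bot V)) as [Hb|Hb]; [now destruct HA|].
    eapply uf_up; eauto using vset_top, le_top.
  - intros [a ha] [b hb] [c hc] E; simpl in E; subst c.
    apply eq_true_iff_eq. rewrite andb_true_iff, !uf_point_true. now apply uf_meet_iff.
  - intros [a ha] [b hb] [c hc] E; simpl in E; subst c.
    apply eq_true_iff_eq. rewrite orb_true_iff, !uf_point_true. now apply uf_join_iff.
  - intros [a ha] [c hc] E; simpl in E; subst c.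
    apply eq_true_iff_eq. rewrite negb_true_iff, <- not_true_iff_false, !uf_point_true.
    now apply uf_perp_iff.
Qed.

End Point.

(* The clause [filt_at] says that a nonempty member of the family contains [x];
   it lets the empty chain through Zorn's lemma. *)
Record filter_at (x : L) (A : L -> Prop) : Prop := {
  filt_sub : forall y, A y -> vset V y;
  filt_up : forall y z, A y -> vset V z -> le y z -> A z;
  filt_meet : forall y z, A y -> A z -> A (meet y z);
  filt_proper : ~ A bot;
  filt_at : forall y, A y -> A x }.

Lemma filter_at_principal x : vset V x -> x <> bot -> filter_at x (fun y => vset V y /\ le x y).
Proof.
  intros hx nx; split.
  - now intros y [].
  - intros y z [_ H1] hz H2. split; [exact hz|]. eapply le_trans; eassumption.
  - intros y z [h1 H1] [h2 H2]. split; [now apply vset_meet|]. now apply meet_glb.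
  - intros [_ H]. apply nx, le_antisym; [exact H|apply le_bot].
  - intros y _. split; [exact hx|apply le_refl].
Qed.

Lemma filter_at_extend x A y : filter_at x A -> A x -> vset V y ->
  (forall a, A a -> meet a y <> bot) ->
  filter_at x (fun z => vset V z /\ exists a, A a /\ le (meet a y) z).
Proof.
  intros HA Ax hy Hy; split.
  - now intros z [].
  - intros z w [_ [a [Aa H]]] hw le. split; [exact hw|].
    exists a; split; [exact Aa|]. eapply le_trans; eassumption.
  - intros z w [h1 [a1 [A1 H1]]] [h2 [a2 [A2 H2]]].
    split; [now apply vset_meet|].
    exists (meet a1 a2); split; [now apply (filt_meet _ _ HA)|].
    apply meet_glb; [eapply le_trans, H1 | eapply le_trans, H2];
      apply meet_glb; eauto using le_trans, meet_lb1, meet_lb2.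
  - intros [_ [a [Aa H]]]. apply (Hy a Aa), le_antisym; [exact H|apply le_bot].
  - intros z _. split; [apply (filt_sub _ _ HA), Ax|].
    exists x; split; [exact Ax|apply meet_lb1].
Qed.

Lemma filter_at_chain_union x (F : (L -> Prop) -> Prop) :
  (forall X, F X -> filter_at x X) ->
  (forall X Y, F X -> F Y -> (forall t, X t -> Y t) \/ (forall t, Y t -> X t)) ->
  filter_at x (fun t => exists X, F X /\ X t).
Proof.
  intros FP Ftot. split.
  - intros y [X [FX Xy]]. exact (filt_sub _ _ (FP X FX) y Xy).
  - intros y z [X [FX Xy]] hz le. exists X; split; [exact FX|].
    exact (filt_up _ _ (FP X FX) y z Xy hz le).
  - intros y z [X [FX Xy]] [Y [FY Yz]].
    destruct (Ftot X Y FX FY) as [S|S].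
    + exists Y; split; [exact FY|]. apply (FP Y FY); auto.
    + exists X; split; [exact FX|]. apply (FP X FX); auto.
  - intros [X [FX Xb]]. exact (filt_proper _ _ (FP X FX) Xb).
  - intros y [X [FX Xy]]. exists X; split; [exact FX|].
    exact (filt_at _ _ (FP X FX) y Xy).
Qed.

Lemma ultrafilter_exists x : vset V x -> x <> bot ->
  exists A, is_ultrafilter A /\ A x.
Proof.
  intros hx nx.
  destruct (zorn_chain_union L (filter_at x) (filter_at_chain_union x))
    as [A [HA Amax]].
  assert (Ax : A x).
  { apply NNPP; intro N. apply N.
    apply (Amax _ (fun y Ay => False_ind _ (N (filt_at _ _ HA y Ay)))
             (filter_at_principal x hx nx)).
    split; [exact hx|apply le_refl]. }
  exists A; split; [|exact Ax]. split; try apply HA.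
  intros y hy. destruct (classic (A y)) as [Ay|nAy]; [now left|right].
  destruct (classic (exists a, A a /\ meet a y = bot)) as [[a [Aa E]]|NE].
  - apply (filt_up _ _ HA a); auto using vset_perp.
    apply (meet_eq_bot_le_perp V); auto. now apply (filt_sub _ _ HA).
  - exfalso; apply nAy.
    refine (Amax _ _ (filter_at_extend x A y HA Ax hy _) y _).
    + intros z Az. split; [now apply (filt_sub _ _ HA)|].
      exists z; split; [exact Az|apply meet_lb1].
    + intros a Aa E; apply NE; now exists a.
    + split; [exact hy|]. exists x; split; [exact Ax|apply meet_lb2].
Qed.

Lemma kappa_inhabited x : vset V x -> x <> bot -> exists eta : sp V, kappa V x eta.
Proof.
  intros hx nx. destruct (ultrafilter_exists x hx nx) as [A [HA Ax]].
  exists (exist _ _ (uf_point_hom A HA)), hx. now apply uf_point_true.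
Qed.

Lemma le_of_kappa_incl c d : vset V c -> vset V d ->
  (forall eta, kappa V c eta -> kappa V d eta) -> le c d.
Proof.
  intros hc hd incl. rewrite <- (perp_invol _ d).
  apply (meet_eq_bot_le_perp V); auto using vset_perp.
  apply NNPP; intro N.
  destruct (kappa_inhabited _ (vset_meet V _ _ hc (vset_perp V d hd)) N) as [eta K].
  apply (proj1 (kappa_perp V d eta hd)).
  - eapply kappa_mono; eauto using vset_perp, meet_lb2.
  - apply incl. eapply kappa_mono; eauto using meet_lb1.
Qed.

End Ultrafilters.

Section Daseinisation.
Context {L : COL}.

Definition outer (V : @Vc L) (a : L) := Inf (fun b => vset V b /\ le a b).
Definition inner (V : @Vc L) (a : L) := Sup (fun b => vset V b /\ le b a).

Lemma vset_outer V a : vset V (outer V a).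
Proof. apply vset_Inf; now intros x []. Qed.
Lemma vset_inner V a : vset V (inner V a).
Proof. apply vset_Sup; now intros x []. Qed.
Lemma le_outer V a : le a (outer V a).
Proof. apply Inf_glb; now intros x []. Qed.
Lemma inner_le V a : le (inner V a) a.
Proof. apply Sup_lub; now intros x []. Qed.

Lemma eps_and_le_perp (S : @Family L) V c : vset V c ->
  (forall eta, kappa V c eta -> ~ S V eta) -> le (eps_and S) (perp c).
Proof.
  intros hc disj. apply Sup_lub; intros b Hb.
  apply (le_trans _ _ _ _ (le_outer V b)), (le_of_kappa_incl V);
    auto using vset_outer, vset_perp.
  intros eta K. apply kappa_perp; [exact hc|]. intro Kc. exact (disj eta Kc (Hb V eta K)).
Qed.

Lemma le_eps_or (S : @Family L) V c : vset V c ->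
  (forall eta, kappa V c eta -> S V eta) -> le c (eps_or S).
Proof.
  intros hc incl. apply Inf_glb; intros a Ha.
  eapply le_trans; [|apply (inner_le V)].
  apply (le_of_kappa_incl V); auto using vset_inner.
  intros eta K; now apply Ha, incl.
Qed.

Lemma fullF_le_joinF_bulletF (S : @Family L) : is_subclop S ->
  leF fullF (joinF S (bulletF S)).
Proof.
  intros [_ CS] V xi _.
  assert (cover : S V xi \/ bulletF S V xi).
  { destruct (classic (S V xi)) as [H|nS]; [now left|right].
    destruct (proj2 (CS V) xi nS) as [c [hc [Kc disj]]].
    apply (kappa_mono V c); [apply vset_outer| |exact Kc].
    eapply le_trans; [|apply le_outer].
    now apply le_perp_sym, (eps_and_le_perp S V). }
  intros a _ Ka. now exists xi.
Qed.

Lemma meetF_circF_le_emptyF (S : @Family L) : is_subclop S ->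
  leF (meetF S (circF S)) emptyF.
Proof.
  intros [_ CS] V xi [d [_ [Kd Sd]]]. destruct (Sd xi Kd) as [HS HC].
  destruct (proj1 (CS V) xi HS) as [c [hc [Kc incl]]].
  apply (kappa_perp V c xi hc); [|exact Kc].
  apply (kappa_mono V _ _ xi (vset_perp V c hc)) in HC; [exact HC|].
  eapply le_trans; [apply inner_le|]. now apply perp_anti, (le_eps_or S V).
Qed.

Lemma bulletF_fullF : leF (bulletF (@fullF L)) emptyF.
Proof.
  intros V xi K. apply (kappa_bot V xi). eapply kappa_mono; [apply vset_bot| |exact K].
  apply Inf_lb. split; [apply vset_bot|].
  eapply le_trans; [|apply perp_top_le_bot]. apply perp_anti.
  apply Sup_ub. now intros W eta _.
Qed.

Lemma fullF_le_circF_emptyF : leF (@fullF L) (circF emptyF).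
Proof.
  intros V xi _. destruct (top_kappa V xi) as [ht Kt].
  eapply kappa_mono; [apply vset_inner| |exact Kt].
  apply Sup_ub. split; [exact ht|].
  eapply le_trans; [apply top_le_perp_bot|]. apply perp_anti.
  apply Inf_lb. now intros W eta.
Qed.

End Daseinisation.

Theorem proposition8p1 (L : COL) :
  (DeMorganAlgebra (@is_subclop L) (@leF L) (@meetF L) (@joinF L) (@bulletF L) <->
   BooleanLattice (@is_subclop L) (@leF L) (@meetF L) (@joinF L)
     (@emptyF L) (@fullF L) (@bulletF L)) /\
  (DeMorganAlgebra (@is_subclop L) (@leF L) (@meetF L) (@joinF L) (@circF L) <->
   BooleanLattice (@is_subclop L) (@leF L) (@meetF L) (@joinF L)
     (@emptyF L) (@fullF L) (@circF L)).
Proof.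
  assert (bounds : forall S : @Family L, is_subclop S -> leF emptyF S /\ leF S fullF)
    by (now split; intros V xi).
  split; split; try apply deMorgan_of_boolean; intro DM.
  - apply boolean_of_excluded_middle; auto using emptyF_subclop, fullF_subclop,
      bulletF_fullF, fullF_le_joinF_bulletF.
  - apply boolean_of_noncontradiction; auto using emptyF_subclop, fullF_subclop,
      fullF_le_circF_emptyF, meetF_circF_le_emptyF.
Qed.
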